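(* Let $n,m\ge 5$ be integers with $m\equiv 1\pmod 4$ and $n\equiv 3\pmod 4$. Then $\gamma_t(C_n\times C_m)\le\frac{(n+1)(m+1)}{4}-3$ and $\gamma_p(C_n\times C_m)\le\frac{(n+1)(m+1)}{4}-2$.
   Context: All graphs are finite, simple and undirected. $C_n$ denotes the cycle of order $n$ and $G\times H$ the Cartesian product of graphs. For a graph $G$ without isolated vertices: a set $D\subseteq V(G)$ is a total dominating set if every vertex of $G$ (including those in $D$) has a neighbour in $D$; $\gamma_t(G)$ is the minimum size of a total dominating set. A set $D\subseteq V(G)$ is a paired dominating set if every vertex outside $D$ has a neighbour in $D$ and the induced subgraph $G[D]$ has a perfect matching; $\gamma_p(G)$ is the minimum size of a paired dominating set. *)

From mathcomp Require Import all_boot.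
Set Implicit Arguments. Unset Strict Implicit. Unset Printing Implicit Defensive.

(* A simple graph is a symmetric irreflexive relation e on a finType T. *)

(* Cycle C_n on vertex set 'I_n: i ~ j iff j = i+1 mod n or i = j+1 mod n
   (for n >= 3 this is the n-cycle). *)
Definition cycle_adj (n : nat) : rel 'I_n :=
  fun i j => (j == (i.+1 %% n) :> nat) || (i == (j.+1 %% n) :> nat).

Definition cart_adj (T U : finType) (e : rel T) (f : rel U) : rel (T * U) :=
  fun x y => ((x.1 == y.1) && f x.2 y.2) || ((x.2 == y.2) && e x.1 y.1).

Definition total_dominating (T : finType) (e : rel T) (D : {set T}) : bool :=
  [forall v, exists u, (u \in D) && e v u].

Definition has_perfect_matching (T : finType) (e : rel T) (D : {set T}) : bool :=
  [exists p : {ffun T -> T}, forall x in D,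
    [&& p x \in D, p (p x) == x, p x != x & e x (p x)]].

Definition paired_dominating (T : finType) (e : rel T) (D : {set T}) : bool :=
  [forall v, (v \notin D) ==> [exists u, (u \in D) && e v u]] && has_perfect_matching e D.

(* gamma_t : minimum size of a total dominating set (default #|T| if none). *)
Definition gamma_t (T : finType) (e : rel T) : nat :=
  \big[minn/#|T|]_(D : {set T} | total_dominating e D) #|D|.

Definition gamma_p (T : finType) (e : rel T) : nat :=
  \big[minn/#|T|]_(D : {set T} | paired_dominating e D) #|D|.

From mathcomp Require Import all_boot all_order zify.
Set Implicit Arguments. Unset Strict Implicit. Unset Printing Implicit Defensive.

(* Write n = 4a + 3, m = 4b + 1 and let the vertex (x, y) of C_n x C_m have
   column x < n and row y < m.  On the rows y = 0 mod 4 take the columns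
   x = 1, 2 mod 4, on the rows y = 2 mod 4 the columns x = 0, 3 mod 4 and the
   last column x = n - 1, and delete (n - 1, 0) and (n - 1, m - 1).  The
   resulting set D_p dominates, and it is matched by horizontal edges except
   for (0, y) ~ (n - 1, y) and (n - 2, 0) ~ (n - 2, m - 1), which use the
   wrap-around edges.  It lies on the 2b + 1 even rows and meets each column
   pair {2k, 2k + 1} of such a row at most once, so halving both coordinates
   embeds it in a (2b + 1) x (2a + 2) grid, i.e. (n + 1)(m + 1)/4 points, two
   of which it misses.  Trading (1, 0), (1, m - 1), (n - 1, 2) for (0, 1) and
   (0, m - 2) gives a total dominating set D_t with one vertex fewer. *)

Lemma bigminn_le_cond (I : finType) (P : pred I) (F : I -> nat) x i :
  P i -> \big[minn/x]_(j | P j) F j <= F i.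
Proof. by rewrite -minEnat; exact: (@Order.TotalTheory.bigmin_le_cond _ nat). Qed.

Lemma gamma_t_le (T : finType) (e : rel T) (D : {set T}) :
  total_dominating e D -> gamma_t e <= #|D|.
Proof. exact: bigminn_le_cond. Qed.

Lemma gamma_p_le (T : finType) (e : rel T) (D : {set T}) :
  paired_dominating e D -> gamma_p e <= #|D|.
Proof. exact: bigminn_le_cond. Qed.

Lemma card_le_inj_avoid (T U : finType) (f : T -> U) (D : {set T}) (F : {set U}) :
  {in D &, injective f} -> (forall v, v \in D -> f v \notin F) -> #|D| <= #|U| - #|F|.
Proof.
move=> f_inj f_avoid; rewrite -(card_in_imset f_inj).
have /subset_leq_card : f @: D \subset ~: F.
  by apply/subsetP => _ /imsetP [v vD ->]; rewrite inE f_avoid.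
by rewrite [#|~: F|]cardsCs setCK.
Qed.

Definition cycle_step (N i j : nat) : Prop :=
  j = i.+1 \/ i = j.+1 \/ (i.+1 = N /\ j = 0) \/ (j.+1 = N /\ i = 0).

Definition grid_step (N M x y x' y' : nat) : Prop :=
  (x = x' /\ cycle_step M y y') \/ (y = y' /\ cycle_step N x x').

Lemma cycle_adj_step N (i j : 'I_N) : cycle_step N i j -> cycle_adj i j.
Proof.
have modS k : k < N -> k.+1 %% N = if k.+1 == N then 0 else k.+1.
  by move=> ltkN; case: eqP => [->|?]; [rewrite modnn | rewrite modn_small; lia].
rewrite /cycle_step /cycle_adj !modS //.
have := ltn_ord i; have := ltn_ord j.
by case: ifP => ?; case: ifP => ?; lia.
Qed.

Lemma cart_adj_step N M (u v : 'I_N * 'I_M) :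
  grid_step N M u.1 u.2 v.1 v.2 -> cart_adj (@cycle_adj N) (@cycle_adj M) u v.
Proof.
case: u v => [x y] [x' y'] /=; rewrite /cart_adj /=.
by case=> -[/val_inj-> /cycle_adj_step->]; rewrite eqxx ?orbT.
Qed.

Lemma exists_grid_nbr N M (P : nat -> nat -> bool) (v : 'I_N.+1 * 'I_M.+1) x' y' :
  x' < N.+1 -> y' < M.+1 -> P x' y' -> grid_step N.+1 M.+1 v.1 v.2 x' y' ->
  [exists u, (u \in [set w : 'I_N.+1 * 'I_M.+1 | P w.1 w.2]) &&
             cart_adj (@cycle_adj N.+1) (@cycle_adj M.+1) v u].
Proof.
move=> ltx lty Pxy step; apply/existsP; exists (inord x', inord y').
by rewrite inE /= !inordK // Pxy cart_adj_step //= !inordK.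
Qed.
Arguments exists_grid_nbr {N M P v} x' y'.

Lemma mod4P x : [\/ x %% 4 = 0, x %% 4 = 1, x %% 4 = 2 | x %% 4 = 3].
Proof.
have : x %% 4 < 4 by rewrite ltn_mod.
by case: (x %% 4) => [|[|[|[|k]]]] // _; [apply: Or41|apply: Or42|apply: Or43|apply: Or44].
Qed.

Section Construction.

Variables a b : nat.
Hypotheses (a_gt0 : 0 < a) (b_gt0 : 0 < b).

Local Notation vertex := ('I_(4 * a + 2).+1 * 'I_(4 * b).+1)%type.
Local Notation G := (cart_adj (@cycle_adj (4 * a + 2).+1) (@cycle_adj (4 * b).+1)).

Definition in_Dp x y : bool :=
  (y %% 4 == 0) && ((x %% 4 == 1) || (x %% 4 == 2))
    && ~~ ((x == 4 * a + 2) && ((y == 0) || (y == 4 * b)))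
  || (y %% 4 == 2) && [|| x %% 4 == 0, x %% 4 == 3 | x == 4 * a + 2].

Definition in_Dt x y : bool :=
  in_Dp x y && ~~ [|| (x == 1) && (y == 0), (x == 1) && (y == 4 * b)
                    | (x == 4 * a + 2) && (y == 2)]
  || (x == 0) && ((y == 1) || (y == 4 * b - 1)).

Definition Dp : {set vertex} := [set v : vertex | in_Dp v.1 v.2].
Definition Dt : {set vertex} := [set v : vertex | in_Dt v.1 v.2].

Local Ltac neighbour_at X Y :=
  by apply: (exists_grid_nbr X Y); simpl; unfold in_Dt, in_Dp, grid_step, cycle_step; lia.

Lemma Dp_total_dominating : total_dominating G Dp.
Proof.
apply/forallP => -[[x ltx] [y lty]] /=; rewrite /Dp.
have [ry|ry|ry|ry] := mod4P y; have [rx|rx|rx|rx] := mod4P x.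
- neighbour_at x.+1 y.
- have [?|?] := eqVneq x (4 * a + 1); last neighbour_at x.+1 y.
  have [?|?] := eqVneq y 0; first neighbour_at (4 * a + 1) (4 * b).
  have [?|?] := eqVneq y (4 * b); [neighbour_at (4 * a + 1) 0 | neighbour_at (4 * a + 2) y].
- neighbour_at x.-1 y.
- neighbour_at x.-1 y.
- neighbour_at x y.+1.
- neighbour_at x y.-1.
- have [?|?] := eqVneq x (4 * a + 2); [neighbour_at x y.+1 | neighbour_at x y.-1].
- neighbour_at x y.+1.
- have [?|?] := eqVneq x 0; [neighbour_at (4 * a + 2) y | neighbour_at x.-1 y].
- neighbour_at x.-1 y.
- have [?|?] := eqVneq x (4 * a + 2); [neighbour_at 0 y | neighbour_at x.+1 y].
- neighbour_at x.+1 y.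
- neighbour_at x y.-1.
- neighbour_at x y.+1.
- have [?|?] := eqVneq x (4 * a + 2); [neighbour_at x y.-1 | neighbour_at x y.+1].
- neighbour_at x y.-1.
Qed.

Definition partner_x x y : nat :=
  if y %% 4 == 2 then
    if x == 0 then 4 * a + 2 else if x == 4 * a + 2 then 0
    else if x %% 4 == 3 then x.+1 else x.-1
  else if (x == 4 * a + 1) && ((y == 0) || (y == 4 * b)) then x
  else if x %% 4 == 1 then x.+1 else x.-1.

Definition partner_y x y : nat :=
  if (x == 4 * a + 1) && (y == 0) then 4 * b
  else if (x == 4 * a + 1) && (y == 4 * b) then 0 else y.

Local Ltac partner_eval := rewrite /partner_x /partner_y; repeat case: ifP => ?; lia.

Local Ltac partner_is x y X Y :=
  (have -> : partner_x x y = X by partner_eval);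
  (have -> : partner_y x y = Y by partner_eval);
  (have -> : partner_x X Y = x by partner_eval);
  (have -> : partner_y X Y = y by partner_eval);
  by split; rewrite /in_Dp /grid_step /cycle_step; lia.

Lemma partner_spec x y : x < (4 * a + 2).+1 -> y < (4 * b).+1 -> in_Dp x y ->
  [/\ partner_x x y < (4 * a + 2).+1, partner_y x y < (4 * b).+1,
      in_Dp (partner_x x y) (partner_y x y),
      grid_step (4 * a + 2).+1 (4 * b).+1 x y (partner_x x y) (partner_y x y)
    & partner_x (partner_x x y) (partner_y x y) = x /\
      partner_y (partner_x x y) (partner_y x y) = y].
Proof.
move=> ltx lty.
have [ry|ry|ry|ry] := mod4P y; have [rx|rx|rx|rx] := mod4P x;
  rewrite {1}/in_Dp ry rx //=.
- move=> _; have [?|?] := eqVneq x (4 * a + 1); last partner_is x y x.+1 y.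
  have [?|?] := eqVneq y 0; first partner_is x y x (4 * b).
  have [?|?] := eqVneq y (4 * b); [partner_is x y x 0 | partner_is x y x.+1 y].
- move=> Dxy; partner_is x y x.-1 y.
- move=> _; have [?|?] := eqVneq x 0; [partner_is x y (4 * a + 2) y | partner_is x y x.-1 y].
- lia.
- move=> /eqP ?; partner_is x y 0 y.
- move=> _; partner_is x y x.+1 y.
Qed.

Definition partner (v : vertex) : vertex :=
  (inord (partner_x v.1 v.2), inord (partner_y v.1 v.2)).

Lemma Dp_perfect_matching : has_perfect_matching G Dp.
Proof.
apply/existsP; exists [ffun v => partner v].
apply/forallP => -[[x ltx] [y lty]]; apply/implyP; rewrite inE /= => Dxy.
have [ltx' lty' Dxy' step [xK yK]] := partner_spec ltx lty Dxy.
rewrite !ffunE /partner /= !inordK // xK yK; apply/and4P; split.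
- by rewrite inE /= !inordK.
- by apply/eqP; congr pair; apply: val_inj; rewrite /= inordK.
- rewrite xpair_eqE -!val_eqE /= !inordK //.
  by move: step; rewrite /grid_step /cycle_step; lia.
- by apply: cart_adj_step; rewrite /= !inordK.
Qed.

Lemma Dp_paired_dominating : paired_dominating G Dp.
Proof.
apply/andP; split; last exact: Dp_perfect_matching.
by apply/forallP => v; apply/implyP => _; move/forallP: Dp_total_dominating.
Qed.

Lemma card_Dp : #|Dp| <= (2 * b).+1 * (2 * a).+2 - 2.
Proof.
pose halve (v : vertex) : 'I_(2 * b).+1 * 'I_(2 * a).+2 := (inord (v.2 %/ 2), inord (v.1 %/ 2)).
pose corners : {set 'I_(2 * b).+1 * 'I_(2 * a).+2} :=
  [set (inord 0, inord (2 * a + 1)); (inord (2 * b), inord (2 * a + 1))].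
have card_corners : #|corners| = 2.
  by rewrite cards2 xpair_eqE -!val_eqE /= !inordK //; lia.
suff : #|Dp| <= #|{: 'I_(2 * b).+1 * 'I_(2 * a).+2}| - #|corners|.
  by rewrite card_prod !card_ord card_corners.
apply: (card_le_inj_avoid (f := halve)).
- move=> [[x ltx] [y lty]] [[x' ltx'] [y' lty']]; rewrite !inE /= => Dxy Dxy' eq_pair.
  have := congr1 (fun w => val w.1) eq_pair; have := congr1 (fun w => val w.2) eq_pair.
  rewrite /= !inordK; try lia.
  move=> eq_y eq_x; have [ex ey] : x = x' /\ y = y' by move: Dxy Dxy'; rewrite /in_Dp; lia.
  by congr pair; apply: val_inj.
- move=> [[x ltx] [y lty]]; rewrite !inE /= /halve /= => Dxy.
  rewrite !xpair_eqE -!val_eqE /= !inordK; try lia.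
  by move: Dxy; rewrite /in_Dp; lia.
Qed.

Lemma Dt_total_dominating : total_dominating G Dt.
Proof.
apply/forallP => -[[x ltx] [y lty]] /=; rewrite /Dt.
have [ry|ry|ry|ry] := mod4P y; have [rx|rx|rx|rx] := mod4P x.
- have [?|?] := eqVneq x 0; last neighbour_at x.+1 y.
  have [?|?] := eqVneq y 0; first neighbour_at 0 1.
  have [?|?] := eqVneq y (4 * b); [neighbour_at 0 (4 * b - 1) | neighbour_at 1 y].
- have [?|?] := eqVneq x (4 * a + 1); last neighbour_at x.+1 y.
  have [?|?] := eqVneq y 0; first neighbour_at (4 * a + 1) (4 * b).
  have [?|?] := eqVneq y (4 * b); [neighbour_at (4 * a + 1) 0 | neighbour_at (4 * a + 2) y].
- have [?|?] := eqVneq x 2; last neighbour_at x.-1 y.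
  have [?|?] := eqVneq y 0; first neighbour_at 2 (4 * b).
  have [?|?] := eqVneq y (4 * b); [neighbour_at 2 0 | neighbour_at 1 y].
- neighbour_at x.-1 y.
- neighbour_at x y.+1.
- have [?|?] := eqVneq x 1; last neighbour_at x y.-1.
  have [?|?] := eqVneq y 1; [neighbour_at 0 1 | neighbour_at 1 y.-1].
- have [?|?] := eqVneq x (4 * a + 2); last neighbour_at x y.-1.
  have [?|?] := eqVneq y 1; [neighbour_at 0 1 | neighbour_at (4 * a + 2) y.+1].
- neighbour_at x y.+1.
- have [?|?] := eqVneq x 0; last neighbour_at x.-1 y.
  have [?|?] := eqVneq y 2; [neighbour_at 0 1 | neighbour_at (4 * a + 2) y].
- neighbour_at x.-1 y.
- have [?|?] := eqVneq x (4 * a + 2); [neighbour_at 0 y | neighbour_at x.+1 y].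
- neighbour_at x.+1 y.
- neighbour_at x y.-1.
- have [?|?] := eqVneq x 1; last neighbour_at x y.+1.
  have [?|?] := eqVneq y (4 * b - 1); [neighbour_at 0 (4 * b - 1) | neighbour_at 1 y.+1].
- have [?|?] := eqVneq x (4 * a + 2); last neighbour_at x y.+1.
  have [?|?] := eqVneq y 3; last neighbour_at (4 * a + 2) y.-1.
  have [?|?] := eqVneq b 1; [neighbour_at 0 3 | neighbour_at (4 * a + 2) 4].
- neighbour_at x y.-1.
Qed.

Lemma card_Dt : #|Dt| <= (2 * b).+1 * (2 * a).+2 - 3.
Proof.
pose c x y : vertex := (inord x, inord y).
pose removed := [set c 1 0; c 1 (4 * b); c (4 * a + 2) 2].
pose added := [set c 0 1; c 0 (4 * b - 1)].
have card_removed : #|removed| = 3.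
  by rewrite /removed -setUA cardsU1 cards2 !inE !xpair_eqE -!val_eqE /= !inordK //; lia.
have card_added : #|added| <= 2 by rewrite /added cards2; case: (_ != _).
have removed_sub : removed \subset Dp.
  apply/subsetP => v; rewrite /removed !inE => /orP [/orP [/eqP->|/eqP->]|/eqP->];
    rewrite /= !inordK // /in_Dp; lia.
have Dt_sub : Dt \subset (Dp :\: removed) :|: added.
  apply/subsetP => -[[x ltx] [y lty]].
  rewrite /removed /added !inE /= !xpair_eqE -!val_eqE /= !inordK; try lia.
  by rewrite /in_Dt; lia.
have := subset_leq_card Dt_sub.
have := leq_of_leqif (leq_card_setU (Dp :\: removed) added).
have := subset_leq_card removed_sub; have := card_Dp.
rewrite cardsD (setIidPr removed_sub) card_removed.
(* the cardinals occur in convertible but syntactically different forms *)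
move: card_added; set d := #|Dp|; set e := #|added|; lia.
Qed.

End Construction.

Theorem theorem5p4 (n m : nat) :
  5 <= n -> 5 <= m -> m %% 4 = 1 -> n %% 4 = 3 ->
  gamma_t (cart_adj (@cycle_adj n) (@cycle_adj m)) <= (n.+1 * m.+1) %/ 4 - 3 /\
  gamma_p (cart_adj (@cycle_adj n) (@cycle_adj m)) <= (n.+1 * m.+1) %/ 4 - 2.
Proof.
move=> n_ge5 m_ge5 m_mod4 n_mod4.
have [a -> a_gt0] : exists2 a, n = (4 * a + 2).+1 & 0 < a by exists (n %/ 4); lia.
have [b -> b_gt0] : exists2 b, m = (4 * b).+1 & 0 < b by exists (m %/ 4); lia.
have -> : (4 * a + 2).+2 * (4 * b).+2 %/ 4 = (2 * b).+1 * (2 * a).+2.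
  by rewrite (_ : _ * _ = (2 * b).+1 * (2 * a).+2 * 4) ?mulnK //; lia.
split.
- exact: leq_trans (gamma_t_le (Dt_total_dominating a_gt0 b_gt0)) (card_Dt a_gt0 b_gt0).
- exact: leq_trans (gamma_p_le (Dp_paired_dominating a_gt0 b_gt0)) (card_Dp a_gt0 b_gt0).
Qed.
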